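(* The $\Sigma_1$-theory $\mathcal{T}_\varsigma$ is convex with respect to $\{\sigma\}$.
   Context: $\varsigma:\mathbb{N}\to\mathbb{N}$ is the Busy Beaver function: $\varsigma(n)$ is the maximum number of $1$'s that a halting Turing machine with at most $n$ states can leave on its tape, starting from an all-$0$ tape. $\Sigma_1$ is the empty signature (only equality, interpreted as identity) with one sort $\sigma$. Let $\psi_{\ge n}=\exists x_1\dots x_n.\bigwedge_{1\le i<j\le n}\neg(x_i=x_j)$, $\psi_{\le n}=\exists x_1\dots x_n\forall y.\bigvee_{i=1}^n y=x_i$, $\psi_{=n}=\psi_{\ge n}\wedge\psi_{\le n}$. $\mathcal{T}_\varsigma$ is the $\Sigma_1$-theory (class of all $\Sigma_1$-interpretations satisfying the axioms) axiomatized by $\{\psi_{\ge\varsigma(k+2)}\vee\bigvee_{i=2}^{k+2}\psi_{=\varsigma(i)}:k\in\mathbb{N}\}$. A theory $\mathcal{T}$ is convex w.r.t. $\{\sigma\}$ if for every conjunction of literals $\phi$ and variables $u_1,v_1,\dots,u_n,v_n$, whenever every $\mathcal{T}$-interpretation satisfies $\phi\to\bigvee_{i=1}^n u_i=v_i$, there is some $i$ such that every $\mathcal{T}$-interpretation satisfies $\phi\to u_i=v_i$. *)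

From mathcomp Require Import all_boot.
From Stdlib Require Import ClassicalEpsilon.

Set Implicit Arguments.
Unset Strict Implicit.
Unset Printing Implicit Defensive.

(* A machine with n states: for (state, read symbol) returns
   (symbol written, move right? (true = right, false = left),
    next state or None = halt). *)
Definition TM (n : nat) := {ffun 'I_n * bool -> bool * bool * option 'I_n}.

(* tape as a zipper: (cells left of head (nearest first), head cell,
   cells right of head (nearest first)); unlisted cells are blank. *)
Definition tape := (seq bool * bool * seq bool)%type.

(* configuration: current state (None = halted) and tape *)
Definition config (n : nat) := (option 'I_n * tape)%type.

Definition move_right (t : tape) : tape :=
  let: (l, h, r) := t in (h :: l, head false r, behead r).

Definition move_left (t : tape) : tape :=
  let: (l, h, r) := t in (behead l, head false l, h :: r).

Definition step (n : nat) (m : TM n) (c : config n) : config n :=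
  match c with
  | (None, t) => (None, t)
  | (Some q, (l, h, r)) =>
      let: (w, mv, q') := m (q, h) in
      let t' := (l, w, r) in
      (q', if mv then move_right t' else move_left t')
  end.

Definition run (n : nat) (m : TM n) (k : nat) (c : config n) : config n :=
  iter k (step m) c.

Definition init_config (n : nat) (q0 : 'I_n) : config n :=
  (Some q0, ([::], false, [::])).

Definition halted (n : nat) (c : config n) : bool := c.1 == None.

Definition ones_on (t : tape) : nat :=
  let: (l, h, r) := t in count id l + h + count id r.

(* number of 1's left by m started in q0 on the blank tape if it halts,
   and 0 otherwise *)
Definition score (n : nat) (q0 : 'I_n) (m : TM n) : nat :=
  match excluded_middle_informative
          (exists k, (fun k => halted (run m k (init_config q0))) k) with
  | left e => ones_on (run m (ex_minn e) (init_config q0)).2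
  | right _ => 0
  end.

Definition bb_exact (n : nat) : nat :=
  match n with
  | 0 => 0
  | n'.+1 => \max_(m : TM n'.+1) score ord0 m
  end.

Definition busy_beaver (n : nat) : nat := \max_(k < n.+1) bb_exact k.

(* First-order logic over the empty one-sorted signature Sigma_1       *)
(* (only equality).  Variables are natural numbers.                    *)

Inductive form : Type :=
| FTrue : form
| FFalse : form
| FEq : nat -> nat -> form
| FNot : form -> form
| FAnd : form -> form -> form
| FOr : form -> form -> form
| FImp : form -> form -> form
| FEx : nat -> form -> form
| FAll : nat -> form -> form.

Definition upd (D : Type) (a : nat -> D) (x : nat) (d : D) : nat -> D :=
  fun y => if y == x then d else a y.

(* an interpretation = a (necessarily nonempty) domain D with an
   assignment a of the variables; equality is identity *)
Fixpoint sat (D : Type) (a : nat -> D) (f : form) : Prop :=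
  match f with
  | FTrue => True
  | FFalse => False
  | FEq x y => a x = a y
  | FNot g => ~ sat a g
  | FAnd g h => sat a g /\ sat a h
  | FOr g h => sat a g \/ sat a h
  | FImp g h => sat a g -> sat a h
  | FEx x g => exists d : D, sat (upd a x d) g
  | FAll x g => forall d : D, sat (upd a x d) g
  end.

Definition bigAnd (s : seq form) : form := foldr FAnd FTrue s.
Definition bigOr (s : seq form) : form := foldr FOr FFalse s.
Definition exs (vs : seq nat) (f : form) : form := foldr FEx f vs.

Definition psi_ge (n : nat) : form :=
  exs (iota 0 n)
    (bigAnd [seq FNot (FEq ij.1 ij.2)
            | ij <- [seq (i, j) | i <- iota 0 n, j <- iota 0 n] & ij.1 < ij.2]).

(* psi_{<= n}: exists x_0 .. x_{n-1}, forall y (= variable n), y = some x_i *)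
Definition psi_le (n : nat) : form :=
  exs (iota 0 n) (FAll n (bigOr [seq FEq n i | i <- iota 0 n])).

Definition psi_eq (n : nat) : form := FAnd (psi_ge n) (psi_le n).

(* the k-th axiom of T_varsigma:
   psi_{>= s(k+2)} \/ \/_{i=2}^{k+2} psi_{= s(i)} *)
Definition axiom_bb (k : nat) : form :=
  FOr (psi_ge (busy_beaver (k + 2)))
      (bigOr [seq psi_eq (busy_beaver i) | i <- iota 2 (k + 1)]).

(* a theory = a class of interpretations *)
Definition theory := forall D : Type, (nat -> D) -> Prop.

Definition T_bb : theory := fun D a => forall k, sat a (axiom_bb k).

Definition valid_in (T : theory) (f : form) : Prop :=
  forall (D : Type) (a : nat -> D), T D a -> sat a f.

(* literals: (true, x, y) is x = y, (false, x, y) is ~ (x = y) *)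
Definition lit_form (l : bool * nat * nat) : form :=
  let: (b, x, y) := l in if b then FEq x y else FNot (FEq x y).

Definition conj_lits (phi : seq (bool * nat * nat)) : form :=
  bigAnd (map lit_form phi).

(* convexity w.r.t. the unique sort; the disjunction is over n >= 1 equalities *)
Definition convex (T : theory) : Prop :=
  forall (phi : seq (bool * nat * nat)) (uv : seq (nat * nat)),
    uv != [::] ->
    valid_in T (FImp (conj_lits phi) (bigOr [seq FEq p.1 p.2 | p <- uv])) ->
    exists2 p, p \in uv & valid_in T (FImp (conj_lits phi) (FEq p.1 p.2)).

(* Every interpretation with an infinite domain satisfies all [psi_ge n], hence
   all axioms of T_bb.  A theory containing all infinite interpretations is
   convex: if [phi] is unsatisfiable any disjunct will do; otherwise interpret
   each variable [x] by the class of the variables [y] such that [phi -> x = y]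
   is valid, in a domain padded to be infinite.  This canonical interpretation
   satisfies [phi] and makes true exactly the equalities entailed by [phi], so
   the disjunct it satisfies is itself entailed. *)

From mathcomp Require Import all_boot.
From Stdlib Require Import Classical FunctionalExtensionality PropExtensionality.

Set Implicit Arguments.
Unset Strict Implicit.

Lemma sat_ext (D : Type) (a b : nat -> D) (f : form) :
  (forall y, a y = b y) -> sat a f -> sat b f.
Proof. by move=> eq_ab; have -> : a = b by apply: functional_extensionality. Qed.

Lemma sat_exs (D : Type) (f : form) (g : nat -> D) (vs : seq nat) (a : nat -> D) :
  sat (fun y => if y \in vs then g y else a y) f -> sat a (exs vs f).
Proof.
elim: vs a => [|v vs IH] a /= Hf; first exact: sat_ext Hf.
exists (g v); apply: IH; apply: sat_ext Hf => y.
rewrite in_cons /upd; case: (y =P v) => [->|_] //=.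
by case: (v \in vs).
Qed.

Lemma sat_bigAnd_map (D : Type) (T : eqType) (F : T -> form) (s : seq T)
    (a : nat -> D) :
  sat a (bigAnd [seq F x | x <- s]) <-> (forall x, x \in s -> sat a (F x)).
Proof.
elim: s => [|x s IH] /=; first by split=> // _ x.
split.
  by case=> Hx /IH Hs y; rewrite in_cons => /orP [/eqP -> //|]; apply: Hs.
move=> Hs; split; first by apply: Hs; rewrite mem_head.
by apply/IH => y Hy; apply: Hs; rewrite in_cons Hy orbT.
Qed.

Lemma sat_bigOr_map (D : Type) (T : eqType) (F : T -> form) (s : seq T)
    (a : nat -> D) :
  sat a (bigOr [seq F x | x <- s]) -> exists2 x, x \in s & sat a (F x).
Proof.
elim: s => [|x s IH] //= [Hx|/IH [y Hy Hs]]; first by exists x; rewrite ?mem_head.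
by exists y; rewrite // in_cons Hy orbT.
Qed.

Lemma sat_conj_lits (D : Type) (a : nat -> D) (phi : seq (bool * nat * nat)) :
  sat a (conj_lits phi) <-> (forall l, l \in phi -> sat a (lit_form l)).
Proof. exact: sat_bigAnd_map. Qed.

Lemma sat_psi_ge_inj (D : Type) (f : nat -> D) (a : nat -> D) (n : nat) :
  injective f -> sat a (psi_ge n).
Proof.
move=> inj_f; apply: (sat_exs (g := f)); apply/sat_bigAnd_map => -[i j].
rewrite mem_filter /= => /andP [lt_ij /allpairsP [[i' j'] /= [Hi Hj [Ei Ej]]]].
by subst i' j'; rewrite /= Hi Hj => /inj_f eq_ij; rewrite eq_ij ltnn in lt_ij.
Qed.

Lemma T_bb_inj (D : Type) (f : nat -> D) (a : nat -> D) :
  injective f -> T_bb a.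
Proof. by move=> inj_f k; left; apply: sat_psi_ge_inj inj_f. Qed.

Section CanonicalInterpretation.

Variables (T : theory) (phi : seq (bool * nat * nat)).

Definition entails_eq (x y : nat) : Prop :=
  valid_in T (FImp (conj_lits phi) (FEq x y)).

Lemma entails_eq_refl (x : nat) : entails_eq x x.
Proof. by []. Qed.

Lemma entails_eq_trans (x y z : nat) :
  entails_eq x y -> entails_eq y z -> entails_eq x z.
Proof. by move=> Exy Eyz D a Ta Hphi /=; rewrite (Exy _ _ Ta Hphi); apply: Eyz. Qed.

Lemma entails_eq_sym (x y : nat) : entails_eq x y -> entails_eq y x.
Proof. by move=> Exy D a Ta Hphi /=; rewrite (Exy _ _ Ta Hphi). Qed.

Lemma entails_eq_lit (x y : nat) : (true, x, y) \in phi -> entails_eq x y.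
Proof. by move=> Hl D a _ /sat_conj_lits /(_ _ Hl). Qed.

(* The second component only serves to make the domain infinite. *)
Definition canonical_dom := ((nat -> Prop) * nat)%type.

Definition canonical_val (x : nat) : canonical_dom := (entails_eq x, 0).

Lemma canonical_dom_inj :
  injective (fun n : nat => (fun _ => False, n) : canonical_dom).
Proof. by move=> m n []. Qed.

Lemma canonical_val_eq (x y : nat) :
  canonical_val x = canonical_val y <-> entails_eq x y.
Proof.
split=> [[] /(f_equal (fun P => P y)) ->|Exy]; first exact: entails_eq_refl.
congr (_, _); apply: functional_extensionality => z.
apply: propositional_extensionality.
by split=> Ez;
  [exact: entails_eq_trans (entails_eq_sym Exy) Ez | exact: entails_eq_trans Exy Ez].
Qed.

Lemma sat_canonical_val :
  (exists (D : Type) (a : nat -> D), T a /\ sat a (conj_lits phi)) ->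
  sat canonical_val (conj_lits phi).
Proof.
move=> [D0 [a0 [T0 Hphi0]]]; apply/sat_conj_lits => -[[[] x] y] Hl /=.
  by apply/canonical_val_eq; apply: entails_eq_lit.
move=> /canonical_val_eq Exy.
by apply: (proj1 (sat_conj_lits _ _) Hphi0 _ Hl); apply: Exy.
Qed.

End CanonicalInterpretation.

Lemma convex_of_infinite_models (T : theory) :
  (forall (D : Type) (f : nat -> D) (a : nat -> D), injective f -> T D a) ->
  convex T.
Proof.
move=> T_inf phi uv uv_neq0 Hvalid.
have [Hsat|Hunsat] :=
  classic (exists (D : Type) (a : nat -> D), T D a /\ sat a (conj_lits phi)).
- have Tcan : T _ (canonical_val T phi) := T_inf _ _ _ canonical_dom_inj.
  have [p Hp /canonical_val_eq Ep] :=
    sat_bigOr_map (Hvalid _ _ Tcan (sat_canonical_val Hsat)).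
  by exists p.
- case: uv uv_neq0 {Hvalid} => [|p uv] // _; exists p; first exact: mem_head.
  by move=> D a Ta Hphi; case: Hunsat; exists D, a.
Qed.

Theorem lemma54 : convex T_bb.
Proof. exact: convex_of_infinite_models T_bb_inj. Qed.
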